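(* Let $\mathcal C$ be a normal category, let $X \xrightarrow{k} A \xleftarrow{s} B$ be an extremally epic cospan in $\mathcal C$, and let $f\colon X\to Y$, $g\colon B\to Y$. Then $f$ and $g$ commute relatively to $(k,s)$ if and only if the $(k,s)$-commutator $[f,g]_{k,s}$ is the zero subobject of $Y$.
   Context: A normal category is a pointed regular category in which every regular epimorphism is a normal epimorphism. Given a cospan $X \xrightarrow{k} A \xleftarrow{s} B$, morphisms $f\colon X\to Y$ and $g\colon B\to Y$ commute relatively to $(k,s)$ if there exists $\varphi\colon A\to Y$ with $\varphi\circ k=f$ and $\varphi\circ s=g$. The cospan is extremally epic if whenever $k=m\circ k'$ and $s=m\circ s'$ for some monomorphism $m\colon M\to A$, $m$ is an isomorphism. For such a cospan, let $\langle k,s\rangle\colon X+B\to A$ be the induced morphism and $\kappa_{k,s}\colon X\diamond_{k,s}B\to X+B$ its kernel; the $(k,s)$-commutator $[f,g]_{k,s}\leq Y$ is the image of $\langle f,g\rangle\circ\kappa_{k,s}$. *)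

Set Implicit Arguments.
Unset Strict Implicit.

Record Category := {
  ob :> Type;
  hom : ob -> ob -> Type;
  comp : forall a b c : ob, hom b c -> hom a b -> hom a c;
  idm : forall a : ob, hom a a;
  comp_assoc : forall a b c d (h : hom c d) (g : hom b c) (f : hom a b),
      comp h (comp g f) = comp (comp h g) f;
  comp_id_l : forall a b (f : hom a b), comp (idm b) f = f;
  comp_id_r : forall a b (f : hom a b), comp f (idm a) = f
}.

Arguments hom {C} a b : rename.
Arguments comp {C a b c} _ _ : rename.
Arguments idm {C} a : rename.
Notation "g \o f" := (comp g f) (at level 40, left associativity).

Section Defs.
Variable C : Category.

Definition mono {M Y : C} (m : hom M Y) : Prop :=
  forall (Z : C) (u v : hom Z M), m \o u = m \o v -> u = v.

Definition is_iso {A B : C} (f : hom A B) : Prop :=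
  exists g : hom B A, g \o f = idm A /\ f \o g = idm B.

Definition initial (I : C) : Prop :=
  forall A : C, exists u : hom I A, forall v : hom I A, v = u.
Definition terminal (T : C) : Prop :=
  forall A : C, exists u : hom A T, forall v : hom A T, v = u.
Definition zero_object (Z : C) : Prop := initial Z /\ terminal Z.

Definition pointed : Prop := exists Z : C, zero_object Z.

Definition zero_mor {A B : C} (f : hom A B) : Prop :=
  exists (Z : C) (u : hom A Z) (v : hom Z B), zero_object Z /\ f = v \o u.

Definition is_pullback {A B D P : C} (f : hom A D) (g : hom B D)
  (p1 : hom P A) (p2 : hom P B) : Prop :=
  f \o p1 = g \o p2 /\
  forall (Q : C) (q1 : hom Q A) (q2 : hom Q B), f \o q1 = g \o q2 ->
    exists u : hom Q P, p1 \o u = q1 /\ p2 \o u = q2 /\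
      forall u' : hom Q P, p1 \o u' = q1 -> p2 \o u' = q2 -> u' = u.

Definition finitely_complete : Prop :=
  (exists T : C, terminal T) /\
  forall (A B D : C) (f : hom A D) (g : hom B D),
    exists (P : C) (p1 : hom P A) (p2 : hom P B), is_pullback f g p1 p2.

Definition is_coequalizer {R A Q : C} (r1 r2 : hom R A) (q : hom A Q) : Prop :=
  q \o r1 = q \o r2 /\
  forall (W : C) (w : hom A W), w \o r1 = w \o r2 ->
    exists u : hom Q W, u \o q = w /\ forall u' : hom Q W, u' \o q = w -> u' = u.

Definition regular_epi {A Q : C} (q : hom A Q) : Prop :=
  exists (R : C) (r1 r2 : hom R A), is_coequalizer r1 r2 q.

Definition regular_category : Prop :=
  finitely_complete /\
  (forall (A B : C) (f : hom A B) (R : C) (r1 r2 : hom R A),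
      is_pullback f f r1 r2 -> exists (Q : C) (q : hom A Q), is_coequalizer r1 r2 q) /\
  (forall (A B D P : C) (f : hom A D) (g : hom B D) (p1 : hom P A) (p2 : hom P B),
      is_pullback f g p1 p2 -> regular_epi g -> regular_epi p1).

Definition is_kernel {K A B : C} (kk : hom K A) (f : hom A B) : Prop :=
  zero_mor (f \o kk) /\
  forall (W : C) (w : hom W A), zero_mor (f \o w) ->
    exists u : hom W K, kk \o u = w /\ forall u' : hom W K, kk \o u' = w -> u' = u.

Definition is_cokernel {A B Q : C} (q : hom B Q) (f : hom A B) : Prop :=
  zero_mor (q \o f) /\
  forall (W : C) (w : hom B W), zero_mor (w \o f) ->
    exists u : hom Q W, u \o q = w /\ forall u' : hom Q W, u' \o q = w -> u' = u.

Definition normal_epi {B Q : C} (q : hom B Q) : Prop :=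
  exists (A : C) (f : hom A B), is_cokernel q f.

Definition normal_category : Prop :=
  pointed /\ regular_category /\
  forall (B Q : C) (q : hom B Q), regular_epi q -> normal_epi q.

Definition is_coproduct {X B P : C} (i1 : hom X P) (i2 : hom B P) : Prop :=
  forall (W : C) (a : hom X W) (b : hom B W),
    exists u : hom P W, u \o i1 = a /\ u \o i2 = b /\
      forall u' : hom P W, u' \o i1 = a -> u' \o i2 = b -> u' = u.

Definition has_binary_coproducts : Prop :=
  forall X B : C, exists (P : C) (i1 : hom X P) (i2 : hom B P), is_coproduct i1 i2.

Definition is_image_factorization {A Y M : C} (h : hom A Y)
  (e : hom A M) (m : hom M Y) : Prop :=
  regular_epi e /\ mono m /\ h = m \o e.

(* A subobject m : M >-> Y is the zero subobject iff it is isomorphic (as a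
   subobject) to 0 >-> Y, i.e. iff M is a zero object. *)
Definition zero_subobject {M Y : C} (m : hom M Y) : Prop := zero_object M.

Definition commute_rel {X A B Y : C} (k : hom X A) (s : hom B A)
  (f : hom X Y) (g : hom B Y) : Prop :=
  exists phi : hom A Y, phi \o k = f /\ phi \o s = g.

Definition extremally_epic {X A B : C} (k : hom X A) (s : hom B A) : Prop :=
  forall (M : C) (m : hom M A) (k' : hom X M) (s' : hom B M),
    mono m -> k = m \o k' -> s = m \o s' -> is_iso m.

(* "[f,g]_{k,s} is the zero subobject of Y": for any coproduct X+B, the induced
   <k,s>, any kernel kappa of <k,s>, the induced <f,g>, and any image
   factorization of <f,g> o kappa, the image is the zero subobject.
   (All these data are unique up to isomorphism.) *)
Definition rel_commutator_trivial {X A B Y : C} (k : hom X A) (s : hom B A)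
  (f : hom X Y) (g : hom B Y) : Prop :=
  forall (P : C) (i1 : hom X P) (i2 : hom B P), is_coproduct i1 i2 ->
  forall ks : hom P A, ks \o i1 = k -> ks \o i2 = s ->
  forall fg : hom P Y, fg \o i1 = f -> fg \o i2 = g ->
  forall (K : C) (kappa : hom K P), is_kernel kappa ks ->
  forall (M : C) (e : hom K M) (m : hom M Y),
    is_image_factorization (fg \o kappa) e m -> zero_subobject m.

End Defs.

(* Since the cospan (k, s) is extremally epic, the comparison map <k,s> : X + B -> A
   is a regular, hence normal, epimorphism, so it is the cokernel of its kernel
   kappa.  A map phi with phi k = f and phi s = g is the same as a factorisation
   of <f,g> through <k,s>, which therefore exists exactly when <f,g> kappa is
   zero, i.e. when its image [f,g]_{k,s} is the zero subobject. *)
Set Implicit Arguments.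

Section NormalCategoryFacts.
Variable C : Category.

Lemma comp_eq_precomp {a b c d : C} {g1 : hom b d} {f1 : hom a b}
  {g2 : hom c d} {f2 : hom a c} :
  g1 \o f1 = g2 \o f2 ->
  forall {z : C} (x : hom z a), g1 \o (f1 \o x) = g2 \o (f2 \o x).
Proof. intros H z x. rewrite !comp_assoc, H. reflexivity. Qed.

Definition epi {A Q : C} (q : hom A Q) : Prop :=
  forall (W : C) (u v : hom Q W), u \o q = v \o q -> u = v.

Lemma regular_epi_epi {A Q : C} {q : hom A Q} : regular_epi q -> epi q.
Proof.
  intros [R [r1 [r2 [Hc Hu]]]] W u v H.
  destruct (Hu W (u \o q)) as [x [_ Hx]].
  { rewrite <- !comp_assoc, Hc. reflexivity. }
  rewrite (Hx u eq_refl), (Hx v (eq_sym H)). reflexivity.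
Qed.

Lemma epi_comp {A B D : C} {t : hom B D} {t' : hom A B} :
  epi t -> epi t' -> epi (t \o t').
Proof.
  intros H1 H2 W u v H. apply H1, H2. rewrite <- !comp_assoc. exact H.
Qed.

Lemma regular_epi_iso_comp {A M Q : C} {e : hom A M} {m : hom M Q} :
  regular_epi e -> is_iso m -> regular_epi (m \o e).
Proof.
  intros [R [r1 [r2 [Hc Hu]]]] [m' [Hm'm Hmm']].
  exists R, r1, r2. split.
  - rewrite <- !comp_assoc, Hc. reflexivity.
  - intros W w Hw. destruct (Hu W w Hw) as [x [Hx Hxu]].
    exists (x \o m'). split.
    + rewrite <- comp_assoc, (comp_assoc m' m e), Hm'm, comp_id_l. exact Hx.
    + intros u' Hu'. rewrite comp_assoc in Hu'.
      rewrite <- (Hxu _ Hu'), <- comp_assoc, Hmm', comp_id_r. reflexivity.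
Qed.

Lemma coproduct_hom_ext {X B P W : C} {i1 : hom X P} {i2 : hom B P} (u v : hom P W) :
  is_coproduct i1 i2 -> u \o i1 = v \o i1 -> u \o i2 = v \o i2 -> u = v.
Proof.
  intros Hcp H1 H2. destruct (Hcp W (v \o i1) (v \o i2)) as [w [_ [_ Hw]]].
  rewrite (Hw u H1 H2), (Hw v eq_refl eq_refl). reflexivity.
Qed.

Lemma zero_object_retract {Z M : C} (t : hom M Z) (z : hom Z M) :
  zero_object Z -> z \o t = idm M -> zero_object M.
Proof.
  intros [Hin Hter] Hzt. split.
  - intros W. destruct (Hin W) as [uZ HuZ]. exists (uZ \o t). intros v.
    rewrite <- (comp_id_r v), <- Hzt, comp_assoc, (HuZ (v \o z)). reflexivity.
  - intros W. destruct (Hter W) as [uZ HuZ]. exists (z \o uZ). intros v.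
    rewrite <- (comp_id_l v), <- Hzt, <- comp_assoc, (HuZ (t \o v)). reflexivity.
Qed.

Lemma zero_mor_compl {A B D : C} {h : hom A B} (x : hom B D) :
  zero_mor h -> zero_mor (x \o h).
Proof.
  intros [Z [u [v [HZ Heq]]]]. exists Z, u, (x \o v). split; auto.
  rewrite Heq, comp_assoc. reflexivity.
Qed.

Lemma zero_mor_compr {A B D : C} {h : hom B D} (x : hom A B) :
  zero_mor h -> zero_mor (h \o x).
Proof.
  intros [Z [u [v [HZ Heq]]]]. exists Z, (u \o x), v. split; auto.
  rewrite Heq, comp_assoc. reflexivity.
Qed.

Lemma image_zero_mor {A M Y : C} {h : hom A Y} {e : hom A M} {m : hom M Y} :
  is_image_factorization h e m -> (zero_mor h <-> zero_object M).
Proof.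
  intros [He [Hm ->]]. split; [| intros HM; exists M, e, m; auto].
  intros [Z [u [v [HZ Heq]]]]. pose proof HZ as [Hin Hter].
  destruct (Hin M) as [z _]. destruct (Hin Y) as [y0 Hy0].
  assert (Hez : e = z \o u).
  { apply Hm. rewrite Heq, comp_assoc, (Hy0 (m \o z)), (Hy0 v). reflexivity. }
  pose proof He as [R [r1 [r2 [_ Hu]]]].
  destruct (Hu Z u) as [t [Ht _]].
  { destruct (Hter R) as [t0 Ht0]. rewrite (Ht0 (u \o r1)), (Ht0 (u \o r2)). reflexivity. }
  apply (zero_object_retract t z HZ), (regular_epi_epi He).
  rewrite <- comp_assoc, Ht, <- Hez, comp_id_l. reflexivity.
Qed.

(* The kernel of f is the pullback of f along 0 -> A. *)
Lemma kernel_exists : pointed C -> finitely_complete C ->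
  forall {P A : C} (f : hom P A), exists (K : C) (kk : hom K P), is_kernel kk f.
Proof.
  intros [Z HZ] [_ Hpb] P A f. pose proof HZ as [Hin Hter].
  destruct (Hin A) as [zA HzA].
  destruct (Hpb P Z A f zA) as [K [p1 [p2 [Hc Hu]]]].
  exists K, p1. split; [exists Z, p2, zA; auto |].
  intros W w [Z' [u [v [[Hin' _] Heq]]]].
  destruct (Hin' Z) as [d _]. destruct (Hin' A) as [a0 Ha0].
  destruct (Hu W w (d \o u)) as [x [Hx1 [Hx2 Hx]]].
  { rewrite Heq, comp_assoc, (Ha0 v), (Ha0 (zA \o d)). reflexivity. }
  exists x. split; auto.
  intros u' Hu'. apply Hx; auto.
  destruct (Hter W) as [t0 Ht0]. rewrite (Ht0 (p2 \o u')), (Ht0 (d \o u)). reflexivity.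
Qed.

Lemma normal_epi_factor {K P Q Y : C} {q : hom P Q} {kappa : hom K P} (x : hom P Y) :
  normal_epi q -> is_kernel kappa q -> zero_mor (x \o kappa) ->
  exists y : hom Q Y, y \o q = x.
Proof.
  intros [A0 [h0 [Hc0 Hcu]]] [_ Hku] Hx.
  destruct (Hku A0 h0 Hc0) as [h' [Hh' _]].
  destruct (Hcu Y x) as [y [Hy _]].
  { rewrite <- Hh', comp_assoc. apply zero_mor_compr. exact Hx. }
  exists y. exact Hy.
Qed.

Section Regular.
Hypothesis HR : regular_category C.

Lemma kernel_pair_eq_mono {Q Y T : C} {m : hom Q Y} {s1 s2 : hom T Q} :
  is_pullback m m s1 s2 -> s1 = s2 -> mono m.
Proof.
  intros [_ Hu] <- Z u v Huv.
  destruct (Hu Z u v Huv) as [w [<- [<- _]]]. reflexivity.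
Qed.

(* The two projections of the kernel pair of m become equal after precomposition
   with a regular epimorphism, obtained by pulling q back twice. *)
Lemma coequalizer_kernel_pair_mono {A Y R Q : C} {h : hom A Y} {r1 r2 : hom R A}
  {q : hom A Q} {m : hom Q Y} :
  is_pullback h h r1 r2 -> is_coequalizer r1 r2 q -> m \o q = h -> mono m.
Proof.
  destruct HR as [[_ Hpb] [_ Hstab]].
  intros [_ Hku] Hq Hmq.
  assert (Hqr : regular_epi q) by (exists R, r1, r2; exact Hq).
  destruct (Hpb Q Q Y m m) as [T [s1 [s2 HT]]].
  destruct (Hpb T A Q s1 q) as [T1 [t [a HT1]]].
  destruct (Hpb T1 A Q (s2 \o t) q) as [T2 [t' [b HT2]]].
  pose proof (regular_epi_epi (Hstab _ _ _ _ _ _ _ _ HT1 Hqr)) as Ht.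
  pose proof (regular_epi_epi (Hstab _ _ _ _ _ _ _ _ HT2 Hqr)) as Ht'.
  destruct HT1 as [HT1c _], HT2 as [HT2c _].
  rewrite <- comp_assoc in HT2c.
  destruct (Hku T2 (a \o t') b) as [c [Hc1 [Hc2 _]]].
  { rewrite <- Hmq, <- !comp_assoc, <- (comp_eq_precomp HT1c).
    rewrite (comp_eq_precomp (proj1 HT)), HT2c. reflexivity. }
  apply (kernel_pair_eq_mono HT), (epi_comp Ht Ht').
  rewrite (comp_eq_precomp HT1c), <- Hc1.
  rewrite (comp_eq_precomp (proj1 Hq)), Hc2, HT2c. reflexivity.
Qed.

Lemma image_exists {A Y : C} (h : hom A Y) :
  exists (M : C) (e : hom A M) (m : hom M Y), is_image_factorization h e m.
Proof.
  destruct HR as [[_ Hpb] [Hcoeq _]].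
  destruct (Hpb A A Y h h) as [R [r1 [r2 Hker]]].
  destruct (Hcoeq A Y h R r1 r2 Hker) as [Q [q Hq]].
  destruct (proj2 Hq Y h (proj1 Hker)) as [m [Hmq _]].
  exists Q, q, m. repeat split.
  - exists R, r1, r2. exact Hq.
  - exact (coequalizer_kernel_pair_mono Hker Hq Hmq).
  - symmetry. exact Hmq.
Qed.

Lemma extremally_epic_regular_epi {X A B P : C} {k : hom X A} {s : hom B A}
  {i1 : hom X P} {i2 : hom B P} {ks : hom P A} :
  extremally_epic k s -> ks \o i1 = k -> ks \o i2 = s -> regular_epi ks.
Proof.
  intros Hext H1 H2.
  destruct (image_exists ks) as [M [e [m [He [Hm Hf]]]]].
  rewrite Hf. apply (regular_epi_iso_comp He).
  apply (Hext M m (e \o i1) (e \o i2) Hm).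
  - rewrite <- H1, Hf, comp_assoc. reflexivity.
  - rewrite <- H2, Hf, comp_assoc. reflexivity.
Qed.

End Regular.
End NormalCategoryFacts.

Theorem mainTheorem4 (C : Category) (HN : normal_category C)
  (Hcop : has_binary_coproducts C)
  (X A B Y : C) (k : hom X A) (s : hom B A)
  (Hext : extremally_epic k s) (f : hom X Y) (g : hom B Y) :
  commute_rel k s f g <-> rel_commutator_trivial k s f g.
Proof.
  destruct HN as [Hpt [HR Hnormal]]. split.
  - intros [phi [Hk Hs]] P i1 i2 Hcp ks Hks1 Hks2 fg Hfg1 Hfg2 K kappa [Hzero _] M e m Him.
    apply (image_zero_mor Him).
    assert (Hfg : fg = phi \o ks).
    { apply (coproduct_hom_ext _ _ Hcp); rewrite <- comp_assoc;
        [rewrite Hks1, Hk | rewrite Hks2, Hs]; assumption. }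
    rewrite Hfg, <- comp_assoc. apply zero_mor_compl, Hzero.
  - intro Htriv.
    destruct (Hcop X B) as [P [i1 [i2 Hcp]]].
    destruct (Hcp A k s) as [ks [Hks1 [Hks2 _]]].
    destruct (Hcp Y f g) as [fg [Hfg1 [Hfg2 _]]].
    destruct (kernel_exists Hpt (proj1 HR) ks) as [K [kappa Hkappa]].
    destruct (image_exists HR (fg \o kappa)) as [M [e [m Him]]].
    assert (Hzero : zero_mor (fg \o kappa))
      by exact (proj2 (image_zero_mor Him) (Htriv _ _ _ Hcp _ Hks1 Hks2 _ Hfg1 Hfg2 _ _ Hkappa _ _ _ Him)).
    pose proof (Hnormal _ _ ks (extremally_epic_regular_epi HR Hext Hks1 Hks2)) as Hks_normal.
    destruct (normal_epi_factor fg Hks_normal Hkappa Hzero) as [phi Hphi].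
    exists phi. split.
    + rewrite <- Hks1, comp_assoc, Hphi. exact Hfg1.
    + rewrite <- Hks2, comp_assoc, Hphi. exact Hfg2.
Qed.
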